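(* Let $\mathfrak a=\mathbb H^p=\mathbb H_1\oplus\dots\oplus\mathbb H_p$, let $\mathfrak z$ be a $3$-dimensional real vector space, and let $A_s:\mathfrak z\to\mathrm{Im}\,\mathbb H$ ($s=1,\dots,p$) be linear isomorphisms; set $J_Z=\mathrm{diag}(L_{A_1Z},\dots,L_{A_pZ})$ and $V=\{J_Z:Z\in\mathfrak z\}$, equipped with an inner product. Let $N\in\mathcal N(V)$ and let $\phi_N:\mathfrak z\to\mathfrak z$ be defined by $N^{-1}J_ZN=J_{\phi_NZ}$. Let $N_{rs}$ denote the $4\times4$ block of $N$ mapping $\mathbb H_s$ to $\mathbb H_r$. If $N_{rs}\neq0$ for some $r,s$, then there exist $w_{rs},w'_{rs}\in\mathbb H$ with $\|w_{rs}\|=1$ and $w'_{rs}\neq0$ such that $N_{rs}=L_{w_{rs}}R_{w'_{rs}}$; moreover $w_{rs}^{-1}(A_rZ)w_{rs}=A_s(\phi_NZ)$ for all $Z\in\mathfrak z$, and $\det(A_sA_r^{-1})=\det(\phi_N)\in\{\pm1\}$, where the determinant of $A_sA_r^{-1}:\mathrm{Im}\,\mathbb H\to\mathrm{Im}\,\mathbb H$ is taken in a fixed basis.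
   Context: $\mathbb H$ denotes the quaternions with standard inner product, $L_q,R_q$ left and right multiplication by $q$. The orthogonal normalizer is $\mathcal N(V)=\{N\in O(\mathfrak a): NVN^{-1}\subset V$ and $K\mapsto NKN^{-1}$ is an orthogonal map of $V$ with respect to its inner product$\}$. The map $\phi_N$ is orthogonal both for the inner product on $\mathfrak z$ pulled back from $V$ and for the one pulled back from the trace form on $\mathfrak{so}(\mathfrak a)$. *)

From HB Require Import structures.
From mathcomp Require Import all_boot all_order all_algebra.
From mathcomp Require Import reals.
From mathcomp Require Import zify.
Set Implicit Arguments. Unset Strict Implicit. Unset Printing Implicit Defensive.
Import Order.TTheory GRing.Theory Num.Theory.
Local Open Scope ring_scope.

Section Quaternions.
Variable R : realType.

(* Quaternions H = R^4 as column vectors, coordinates w.r.t. (1, i, j, k). *)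
Definition qc (x : 'cV[R]_4) (k : nat) : R := x (inord k) 0.

Definition qmul (x y : 'cV[R]_4) : 'cV[R]_4 :=
  let a1 := qc x 0 in let b1 := qc x 1 in let c1 := qc x 2 in let d1 := qc x 3 in
  let a2 := qc y 0 in let b2 := qc y 1 in let c2 := qc y 2 in let d2 := qc y 3 in
  \col_(i < 4)
    [:: a1 * a2 - b1 * b2 - c1 * c2 - d1 * d2;
        a1 * b2 + b1 * a2 + c1 * d2 - d1 * c2;
        a1 * c2 - b1 * d2 + c1 * a2 + d1 * b2;
        a1 * d2 + b1 * c2 - c1 * b2 + d1 * a2]`_i.

Definition qconj (x : 'cV[R]_4) : 'cV[R]_4 :=
  \col_(i < 4) (if val i == 0%N then x i 0 else - x i 0).

Definition qnorm2 (x : 'cV[R]_4) : R := \sum_(i < 4) x i 0 ^+ 2.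

Definition qinv (x : 'cV[R]_4) : 'cV[R]_4 := (qnorm2 x)^-1 *: qconj x.

Definition Lmx (q : 'cV[R]_4) : 'M[R]_4 :=
  \matrix_(i < 4, j < 4) (qmul q (delta_mx j 0)) i 0.
Definition Rmx (q : 'cV[R]_4) : 'M[R]_4 :=
  \matrix_(i < 4, j < 4) (qmul (delta_mx j 0) q) i 0.

(* Im H : (x,y,z) |-> x i + y j + z k *)
Definition imq (v : 'cV[R]_3) : 'cV[R]_4 :=
  \col_(i < 4) (if val i == 0%N then 0 else v (inord (val i).-1) 0).

End Quaternions.

(* Block structure of a = H^p = R^(p*4): coordinate r*4+i is the i-th
   coordinate of the summand H_r. *)
Lemma blk_subproof p (a : 'I_(p * 4)) : (a %/ 4 < p)%N.
Proof. by rewrite ltn_divLR // ltn_ord. Qed.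
Lemma off_subproof p (a : 'I_(p * 4)) : (a %% 4 < 4)%N.
Proof. by rewrite ltn_pmod. Qed.
Lemma idx_subproof p (r : 'I_p) (i : 'I_4) : (r * 4 + i < p * 4)%N.
Proof. have := ltn_ord r; have := ltn_ord i; lia. Qed.

Definition blk p (a : 'I_(p * 4)) : 'I_p := Ordinal (blk_subproof a).
Definition off p (a : 'I_(p * 4)) : 'I_4 := Ordinal (off_subproof a).
Definition idx p (r : 'I_p) (i : 'I_4) : 'I_(p * 4) := Ordinal (idx_subproof r i).

Section Setting.
Variables (R : realType) (p : nat).
(* A s : z = R^3 -> Im H, given by its 3x3 matrix w.r.t. the basis (i,j,k) *)
Variable A : 'I_p -> 'M[R]_3.

Definition Aq (s : 'I_p) (Z : 'cV[R]_3) : 'cV[R]_4 := imq (A s *m Z).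

Definition JZ (Z : 'cV[R]_3) : 'M[R]_(p * 4) :=
  \matrix_(a, b) (if blk a == blk b then Lmx (Aq (blk a) Z) (off a) (off b) else 0).

Definition inV (K : 'M[R]_(p * 4)) : Prop := exists Z, K = JZ Z.

Definition is_inner_on_V (ip : 'M[R]_(p * 4) -> 'M[R]_(p * 4) -> R) : Prop :=
  [/\ forall K K', inV K -> inV K' -> ip K K' = ip K' K,
      forall (a : R) K K' K'', inV K -> inV K' -> inV K'' ->
        ip (a *: K + K') K'' = a * ip K K'' + ip K' K''
    & forall K, inV K -> K != 0 -> 0 < ip K K].

Definition conjN (N K : 'M[R]_(p * 4)) : 'M[R]_(p * 4) := N *m K *m invmx N.

Definition in_normalizer (ip : 'M[R]_(p * 4) -> 'M[R]_(p * 4) -> R)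
  (N : 'M[R]_(p * 4)) : Prop :=
  [/\ N^T *m N = 1%:M,
      forall K, inV K -> inV (conjN N K)
    & forall K K', inV K -> inV K' -> ip (conjN N K) (conjN N K') = ip K K'].

Definition Nblk (N : 'M[R]_(p * 4)) (r s : 'I_p) : 'M[R]_4 :=
  \matrix_(i < 4, j < 4) N (idx r i) (idx s j).

End Setting.

From HB Require Import structures.
From mathcomp Require Import all_boot all_order all_algebra.
From mathcomp Require Import reals ring lra zify.
Import Order.TTheory GRing.Theory Num.Theory.
Local Open Scope ring_scope.
Set Implicit Arguments. Unset Strict Implicit. Unset Printing Implicit Defensive.

(* On the block [N_rs], the relation [N^-1 J_Z N = J_(phi Z)] reads
   [L_(A_r Z) N_rs = N_rs L_(A_s phi Z)]: [N_rs] intertwines left multiplication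
   by [x] and by [T x] on [Im H], where [T = A_s phi A_r^-1].  A nonzero
   intertwiner is injective and determined by [u = N_rs 1]; evaluating it on
   products shows that [T] respects quaternion multiplication, so the images
   [b0, b1, b2] of [i, j, k] satisfy the quaternion relations.  A Reynolds-type
   average then yields a unit [w] with [x w = w (T x)], hence
   [N_rs = L_w R_(w^-1 u)], and [det T = 1] since the real part of [b0 b1 b2]
   is minus the triple product.  Finally [phi] preserves the positive definite
   form [ip (J_Z, J_W)], so [det phi = +-1], and [det T = 1] becomes
   [det (A_s A_r^-1) = det phi]. *)

Lemma mulmx_cV_ext (R : pzSemiRingType) m n (X Y : 'M[R]_(m, n)) :
  (forall v : 'cV[R]_n, X *m v = Y *m v) -> X = Y.
Proof.
move=> h; apply/matrixP => i j.
by have := congr1 (fun v : 'cV_m => v i 0) (h (delta_mx j 0)); rewrite -!colE !mxE.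
Qed.

Section QuaternionCoordinates.
Variable R : realType.
Implicit Types (x y z q : 'cV[R]_4) (a b c d : R).

Lemma qext x y : qc x 0 = qc y 0 -> qc x 1 = qc y 1 -> qc x 2 = qc y 2 ->
  qc x 3 = qc y 3 -> x = y.
Proof.
rewrite /qc => h0 h1 h2 h3; apply/matrixP => i j; rewrite (ord1 j) -(inord_val i).
by case: i => [[|[|[|[|?]]]] ?].
Qed.

Definition mkq a b c d : 'cV[R]_4 := \col_(i < 4) [:: a; b; c; d]`_i.
Definition q1 := mkq 1 0 0 0.
Definition qi := mkq 0 1 0 0.
Definition qj := mkq 0 0 1 0.
Definition qk := mkq 0 0 0 1.

Lemma qc_mkq a b c d : (qc (mkq a b c d) 0 = a) * (qc (mkq a b c d) 1 = b)
  * (qc (mkq a b c d) 2 = c) * (qc (mkq a b c d) 3 = d).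
Proof. by rewrite /qc /mkq !mxE /= !inordK. Qed.

Lemma qc_mul x y :
  (qc (qmul x y) 0 = qc x 0 * qc y 0 - qc x 1 * qc y 1 - qc x 2 * qc y 2 - qc x 3 * qc y 3)
  * (qc (qmul x y) 1 = qc x 0 * qc y 1 + qc x 1 * qc y 0 + qc x 2 * qc y 3 - qc x 3 * qc y 2)
  * (qc (qmul x y) 2 = qc x 0 * qc y 2 - qc x 1 * qc y 3 + qc x 2 * qc y 0 + qc x 3 * qc y 1)
  * (qc (qmul x y) 3 = qc x 0 * qc y 3 + qc x 1 * qc y 2 - qc x 2 * qc y 1 + qc x 3 * qc y 0).
Proof. by rewrite /qc /qmul !mxE /= !inordK. Qed.

Lemma qc_conj x : (qc (qconj x) 0 = qc x 0) * (qc (qconj x) 1 = - qc x 1)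
  * (qc (qconj x) 2 = - qc x 2) * (qc (qconj x) 3 = - qc x 3).
Proof. by rewrite /qc /qconj !mxE /= !inordK. Qed.

Lemma qc_imq (v : 'cV[R]_3) : (qc (imq v) 0 = 0) * (qc (imq v) 1 = v (inord 0) 0)
  * (qc (imq v) 2 = v (inord 1) 0) * (qc (imq v) 3 = v (inord 2) 0).
Proof. by rewrite /qc /imq !mxE /= !inordK. Qed.

Lemma qc_add x y k : qc (x + y) k = qc x k + qc y k. Proof. by rewrite /qc mxE. Qed.
Lemma qc_opp x k : qc (- x) k = - qc x k. Proof. by rewrite /qc mxE. Qed.
Lemma qc_scale a x k : qc (a *: x) k = a * qc x k. Proof. by rewrite /qc mxE. Qed.
Lemma qc0 k : qc (0 : 'cV[R]_4) k = 0. Proof. by rewrite /qc mxE. Qed.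

Definition qcE := (qc_add, qc_opp, qc_scale, qc0, qc_mul, qc_conj, qc_imq, qc_mkq).

(* Identities of quaternion expressions are checked on coordinate 4-tuples:
   rewriting coordinates directly would duplicate every subterm at each step. *)
Definition qtuple x := (qc x 0, qc x 1, qc x 2, qc x 3).

Definition tmul (u v : R * R * R * R) :=
  let: (a1, b1, c1, d1) := u in let: (a2, b2, c2, d2) := v in
  (a1 * a2 - b1 * b2 - c1 * c2 - d1 * d2, a1 * b2 + b1 * a2 + c1 * d2 - d1 * c2,
   a1 * c2 - b1 * d2 + c1 * a2 + d1 * b2, a1 * d2 + b1 * c2 - c1 * b2 + d1 * a2).
Definition tadd (u v : R * R * R * R) :=
  let: (a1, b1, c1, d1) := u in let: (a2, b2, c2, d2) := v in
  (a1 + a2, b1 + b2, c1 + c2, d1 + d2).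
Definition tscale (k : R) (u : R * R * R * R) :=
  let: (a, b, c, d) := u in (k * a, k * b, k * c, k * d).

Lemma qtuple_inj : injective qtuple.
Proof. by move=> x y [] *; apply: qext. Qed.

Lemma qtuple_mul x y : qtuple (qmul x y) = tmul (qtuple x) (qtuple y).
Proof. by rewrite /qtuple !qcE. Qed.
Lemma qtuple_add x y : qtuple (x + y) = tadd (qtuple x) (qtuple y).
Proof. by rewrite /qtuple !qcE. Qed.
Lemma qtuple_opp x : qtuple (- x) = tscale (-1) (qtuple x).
Proof. by rewrite /qtuple /tscale !qcE !mulN1r. Qed.
Lemma qtuple_scale a x : qtuple (a *: x) = tscale a (qtuple x).
Proof. by rewrite /qtuple !qcE. Qed.
Lemma qtuple0 : qtuple 0 = (0, 0, 0, 0).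
Proof. by rewrite /qtuple !qcE. Qed.
Lemma qtuple_mkq a b c d : qtuple (mkq a b c d) = (a, b, c, d).
Proof. by rewrite /qtuple !qcE. Qed.

End QuaternionCoordinates.

Arguments q1 {R}. Arguments qi {R}. Arguments qj {R}. Arguments qk {R}.

Ltac quat_ring := apply: qtuple_inj; rewrite ?/q1 ?/qi ?/qj ?/qk
  !(qtuple_mul, qtuple_add, qtuple_opp, qtuple_scale, qtuple0, qtuple_mkq);
  cbv beta iota zeta delta [tmul tadd tscale qtuple]; congr (_, _, _, _); ring.

Section QuaternionAlgebra.
Variable R : realType.
Implicit Types (x y z q : 'cV[R]_4) (a b c d : R).

Lemma qmulA x y z : qmul x (qmul y z) = qmul (qmul x y) z. Proof. quat_ring. Qed.
Lemma qmulDl x y z : qmul (x + y) z = qmul x z + qmul y z. Proof. quat_ring. Qed.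
Lemma qmulDr x y z : qmul x (y + z) = qmul x y + qmul x z. Proof. quat_ring. Qed.
Lemma qmulNl x y : qmul (- x) y = - qmul x y. Proof. quat_ring. Qed.
Lemma qmulNr x y : qmul x (- y) = - qmul x y. Proof. quat_ring. Qed.
Lemma qmulZl a x y : qmul (a *: x) y = a *: qmul x y. Proof. quat_ring. Qed.
Lemma qmulZr a x y : qmul x (a *: y) = a *: qmul x y. Proof. quat_ring. Qed.
Lemma qmul0l x : qmul 0 x = 0. Proof. quat_ring. Qed.
Lemma qmul0r x : qmul x 0 = 0. Proof. quat_ring. Qed.
Lemma qmul1l x : qmul q1 x = x. Proof. quat_ring. Qed.
Lemma qmul1r x : qmul x q1 = x. Proof. quat_ring. Qed.

Lemma sum_ord4 (F : 'I_4 -> R) :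
  \sum_(i < 4) F i = F (inord 0) + F (inord 1) + F (inord 2) + F (inord 3).
Proof.
rewrite !big_ord_recr big_ord0 /= add0r.
by congr (_ + _ + _ + _); congr F; apply: val_inj; rewrite /= inordK.
Qed.

Lemma qnorm2E x : qnorm2 x = qc x 0 ^+ 2 + qc x 1 ^+ 2 + qc x 2 ^+ 2 + qc x 3 ^+ 2.
Proof. by rewrite /qnorm2 sum_ord4. Qed.

Lemma qnorm2_ge0 x : 0 <= qnorm2 x.
Proof. by apply: sumr_ge0 => i _; apply: sqr_ge0. Qed.

Lemma qnorm2_eq0 x : (qnorm2 x == 0) = (x == 0).
Proof.
rewrite /qnorm2 psumr_eq0 => [|i _]; last exact: sqr_ge0.
apply/allP/eqP => [h|-> i _]; last by rewrite mxE expr0n eqxx.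
apply/matrixP => i j; rewrite (ord1 j) mxE.
by apply/eqP; rewrite -sqrf_eq0; apply: (implyP (h i _)); rewrite ?mem_index_enum.
Qed.

Lemma qnorm2Z a x : qnorm2 (a *: x) = a ^+ 2 * qnorm2 x.
Proof. rewrite !qnorm2E !qcE; ring. Qed.

Lemma qnormalize x : x != 0 -> qnorm2 ((Num.sqrt (qnorm2 x))^-1 *: x) = 1.
Proof.
rewrite -qnorm2_eq0 => hx.
by rewrite qnorm2Z exprVn sqr_sqrtr ?qnorm2_ge0 ?mulVf.
Qed.

Lemma qinvl x : x != 0 -> qmul (qinv x) x = q1.
Proof.
rewrite -qnorm2_eq0 qnorm2E => hx.
by apply: qext; rewrite /qinv /q1 !qcE qnorm2E; field; exact: hx.
Qed.

Lemma qinvr x : x != 0 -> qmul x (qinv x) = q1.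
Proof.
rewrite -qnorm2_eq0 qnorm2E => hx.
by apply: qext; rewrite /qinv /q1 !qcE qnorm2E; field; exact: hx.
Qed.

Lemma qmulIl x y z : x != 0 -> qmul x y = qmul x z -> y = z.
Proof. by move=> hx /(congr1 (qmul (qinv x))); rewrite !qmulA qinvl // !qmul1l. Qed.

Lemma qc_delta j k : (j < 4)%N -> (k < 4)%N ->
  qc (delta_mx (inord j) 0 : 'cV[R]_4) k = (k == j)%:R.
Proof. by move=> hj hk; rewrite /qc mxE -val_eqE /= !inordK // eqxx andbT. Qed.

Lemma qc_mulmx (X : 'M[R]_4) x k : (k < 4)%N ->
  qc (X *m x) k = X (inord k) (inord 0) * qc x 0 + X (inord k) (inord 1) * qc x 1
    + X (inord k) (inord 2) * qc x 2 + X (inord k) (inord 3) * qc x 3.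
Proof. by move=> hk; rewrite {1}/qc mxE sum_ord4. Qed.

Lemma Lmx_mul q x : Lmx q *m x = qmul q x.
Proof.
apply: qext; rewrite qc_mulmx // /Lmx !mxE -!/(qc _ _) !qcE !qc_delta //=;
  by rewrite ?inordK //=; ring.
Qed.

Lemma Rmx_mul q x : Rmx q *m x = qmul x q.
Proof.
apply: qext; rewrite qc_mulmx // /Rmx !mxE -!/(qc _ _) !qcE !qc_delta //=;
  by rewrite ?inordK //=; ring.
Qed.

Lemma Lmx_Rmx_comm q q' : Lmx q *m Rmx q' = Rmx q' *m Lmx q.
Proof. by apply: mulmx_cV_ext => x; rewrite -!mulmxA !Lmx_mul !Rmx_mul qmulA. Qed.

Lemma LmxD q q' : Lmx (q + q') = Lmx q + Lmx q'.
Proof. by apply: mulmx_cV_ext => x; rewrite mulmxDl !Lmx_mul qmulDl. Qed.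

Lemma LmxZ a q : Lmx (a *: q) = a *: Lmx q.
Proof. by apply: mulmx_cV_ext => x; rewrite -scalemxAl !Lmx_mul qmulZl. Qed.

Definition e3 k : 'cV[R]_3 := delta_mx (inord k) 0.
Definition imv x : 'cV[R]_3 := \col_(i < 3) x (inord i.+1) 0.

Lemma imqK : cancel (@imq R) imv.
Proof.
move=> v; apply/matrixP => i j; rewrite (ord1 j) !mxE /= inordK ?inord_val //.
by case: i => [[|[|[|]]]].
Qed.

Lemma imqD (v v' : 'cV[R]_3) : imq (v + v') = imq v + imq v'.
Proof. by apply: qext; rewrite !qcE ?mxE ?addr0. Qed.

Lemma imqZ a (v : 'cV[R]_3) : imq (a *: v) = a *: imq v.
Proof. by apply: qext; rewrite !qcE ?mxE ?mulr0. Qed.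

Lemma imq0 : imq 0 = 0 :> 'cV[R]_4.
Proof. by rewrite -(scale0r 0) imqZ !scale0r. Qed.

Lemma qdecomp x : x = qc x 0 *: q1 + imq (imv x).
Proof. by apply: qext; rewrite /q1 !qcE ?mxE ?inordK // /qc; ring. Qed.

Lemma cV3E (v : 'cV[R]_3) :
  v = v (inord 0) 0 *: e3 0 + v (inord 1) 0 *: e3 1 + v (inord 2) 0 *: e3 2.
Proof.
apply/matrixP => i j; rewrite (ord1 j) !mxE -(inord_val i).
by case: i => [[|[|[|i]]] hi] //=; rewrite -!val_eqE /= !inordK //=; ring.
Qed.

Lemma imq_e3 : [/\ imq (e3 0) = qi, imq (e3 1) = qj & imq (e3 2) = qk].
Proof. by split; apply: qext; rewrite /qi /qj /qk !qcE ?mxE -?val_eqE /= ?inordK. Qed.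

End QuaternionAlgebra.
Arguments e3 {R} k.

Section QuaternionTriple.
Variable R : realType.
Variables b0 b1 b2 : 'cV[R]_4.
Hypotheses (b00 : qmul b0 b0 = - q1) (b11 : qmul b1 b1 = - q1)
  (b01 : qmul b0 b1 = b2) (b10 : qmul b1 b0 = - b2).

Lemma quat_triple_mul : [/\ qmul b2 b2 = - q1, qmul b1 b2 = b0, qmul b2 b1 = - b0,
  qmul b2 b0 = b1 & qmul b0 b2 = - b1].
Proof.
have b21 : qmul b2 b1 = - b0 by rewrite -b01 -qmulA b11 qmulNr qmul1r.
have b20 : qmul b2 b0 = b1.
  by rewrite -[b2]opprK -b10 qmulNl -qmulA b00 qmulNr qmul1r opprK.
split=> //.
- by rewrite -{2}b01 qmulA b20 b11.
- by rewrite -b01 qmulA b10 qmulNl b21 opprK.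
- by rewrite -b01 qmulA b00 qmulNl qmul1l.
Qed.

(* [avg y] is the sum of [g y s(g)^-1] over [g = 1, i, j, k], where [s] sends
   [i, j, k] to [b0, b1, b2]; like a Reynolds operator it intertwines [g] with [s(g)]. *)
Let avg y := y - qmul (qmul qi y) b0 - qmul (qmul qj y) b1 - qmul (qmul qk y) b2.

Lemma avg_basis_sum :
  avg q1 - qmul qi (avg qi) - qmul qj (avg qj) - qmul qk (avg qk) = 4%:R *: q1.
Proof. rewrite /avg; quat_ring. Qed.

Lemma avg_mul_i y : qmul qi (avg y) - qmul (avg y) b0 =
  qmul (qmul qi y) (q1 + qmul b0 b0) + qmul (qmul qk y) (qmul b2 b0 - b1)
  + qmul (qmul qj y) (qmul b1 b0 + b2).
Proof. rewrite /avg; quat_ring. Qed.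

Lemma avg_mul_j y : qmul qj (avg y) - qmul (avg y) b1 =
  qmul (qmul qj y) (q1 + qmul b1 b1) + qmul (qmul qi y) (qmul b0 b1 - b2)
  + qmul (qmul qk y) (qmul b2 b1 + b0).
Proof. rewrite /avg; quat_ring. Qed.

Lemma avg_mul_k y : qmul qk (avg y) - qmul (avg y) b2 =
  qmul (qmul qk y) (q1 + qmul b2 b2) + qmul (qmul qi y) (qmul b0 b2 + b1)
  + qmul (qmul qj y) (qmul b1 b2 - b0).
Proof. rewrite /avg; quat_ring. Qed.

Lemma conj_quat_triple : exists w, [/\ qnorm2 w = 1, qmul qi w = qmul w b0,
  qmul qj w = qmul w b1 & qmul qk w = qmul w b2].
Proof.
have [b22 b12 b21 b20 b02] := quat_triple_mul.
have [v v_neq0] : exists v, avg v != 0.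
  case: (eqVneq (avg q1) 0) => [h1|]; last by exists q1.
  case: (eqVneq (avg qi) 0) => [hi|]; last by exists qi.
  case: (eqVneq (avg qj) 0) => [hj|]; last by exists qj.
  case: (eqVneq (avg qk) 0) => [hk|]; last by exists qk.
  have := avg_basis_sum; rewrite h1 hi hj hk !qmul0r !subr0 => /(congr1 (fun q => qc q 0)).
  by rewrite /q1 !qcE mulr1 => /eqP; rewrite eq_sym pnatr_eq0.
have vi : qmul qi (avg v) = qmul (avg v) b0.
  by apply/eqP; rewrite -subr_eq0 avg_mul_i b00 b20 b10 !(addrN, addNr) !qmul0r !addr0.
have vj : qmul qj (avg v) = qmul (avg v) b1.
  by apply/eqP; rewrite -subr_eq0 avg_mul_j b11 b01 b21 !(addrN, addNr) !qmul0r !addr0.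
have vk : qmul qk (avg v) = qmul (avg v) b2.
  by apply/eqP; rewrite -subr_eq0 avg_mul_k b22 b02 b12 !(addrN, addNr) !qmul0r !addr0.
exists ((Num.sqrt (qnorm2 (avg v)))^-1 *: avg v).
by rewrite qnormalize // !qmulZl !qmulZr vi vj vk.
Qed.

End QuaternionTriple.

Lemma det_mx33 (R : comPzRingType) (X : 'M[R]_3) :
  let a i j := X (inord i) (inord j) in
  \det X = a 0 0 * (a 1 1 * a 2 2 - a 1 2 * a 2 1)
         - a 1 0 * (a 0 1 * a 2 2 - a 0 2 * a 2 1)
         + a 2 0 * (a 0 1 * a 1 2 - a 0 2 * a 1 1).
Proof.
move=> a; have aE (i j : 'I_3) : X i j = a i j by rewrite /a !inord_val.
rewrite (expand_det_col _ ord0) !big_ord_recl big_ord0 /cofactor.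
rewrite !(expand_det_col _ ord0) !big_ord_recl !big_ord0 /cofactor.
rewrite ![\det _]det_mx11 !mxE !aE /=; ring.
Qed.

Section QuaternionDeterminant.
Variable R : realType.
Variable T : 'M[R]_3.

Lemma qc0_mul_imq_det :
  qc (qmul (qmul (imq (T *m e3 0)) (imq (T *m e3 1))) (imq (T *m e3 2))) 0 = - \det T.
Proof. by rewrite !qcE /e3 -!colE !mxE det_mx33; ring. Qed.

Lemma det_quat_triple :
  qmul (imq (T *m e3 0)) (imq (T *m e3 1)) = imq (T *m e3 2) ->
  qmul (imq (T *m e3 2)) (imq (T *m e3 2)) = - q1 -> \det T = 1.
Proof.
by move=> h01 h22; apply: oppr_inj; rewrite -qc0_mul_imq_det h01 h22 /q1 !qcE.
Qed.

End QuaternionDeterminant.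

Definition intertwines (R : realType) (T : 'M[R]_3) (M : 'M[R]_4) :=
  forall x : 'cV[R]_3, Lmx (imq x) *m M = M *m Lmx (imq (T *m x)).

Section Intertwiners.
Variable R : realType.
Implicit Types (T : 'M[R]_3) (M : 'M[R]_4) (x y : 'cV[R]_3) (q w : 'cV[R]_4).

Lemma intertwinesP T M : intertwines T M ->
  forall x q, qmul (imq x) (M *m q) = M *m qmul (imq (T *m x)) q.
Proof. by move=> hTM x q; rewrite -!Lmx_mul !mulmxA hTM. Qed.

Lemma intertwines_q1 T M y : intertwines T M ->
  M *m imq (T *m y) = qmul (imq y) (M *m q1).
Proof. by move=> hTM; rewrite (intertwinesP hTM) qmul1r. Qed.

Lemma intertwines0 T : intertwines T 0.
Proof. by move=> x; rewrite mulmx0 mul0mx. Qed.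

Lemma intertwines_mulRmx T M q : intertwines T M -> intertwines T (M *m Rmx q).
Proof. by move=> hTM x; rewrite mulmxA hTM -!mulmxA Lmx_Rmx_comm. Qed.

Lemma intertwines_LR T w w' :
  (forall x, qmul (imq x) w = qmul w (imq (T *m x))) -> intertwines T (Lmx w *m Rmx w').
Proof.
move=> hw x; apply: mulmx_cV_ext => q.
by rewrite !mulmxA -!mulmxA !(Lmx_mul, Rmx_mul) !qmulA hw.
Qed.

(* An intertwiner is determined by the image of [1], since [T] is onto. *)
Lemma intertwines_eq T M1 M2 : T \in unitmx ->
  intertwines T M1 -> intertwines T M2 -> M1 *m q1 = M2 *m q1 -> M1 = M2.
Proof.
move=> hT h1 h2 e; apply: mulmx_cV_ext => q.
rewrite (qdecomp q) -(mulKVmx hT (imv q)) !mulmxDr -!scalemxAr.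
by rewrite !intertwines_q1 // e.
Qed.

Section NonzeroIntertwiner.
Variables (T : 'M[R]_3) (M : 'M[R]_4).
Hypotheses (hTM : intertwines T M) (hM : M != 0).

Lemma intertwiner_unitmx : T \in unitmx.
Proof.
rewrite unitmxE unitfE -det_tr; apply/negP => /det0P [v v_neq0 hv].
have Tv0 : T *m v^T = 0 by rewrite -(trmxK T) -trmx_mul hv trmx0.
have imq_neq0 : imq v^T != 0.
  apply/eqP; rewrite -imq0 => /(can_inj (@imqK R)) vT0.
  by move: v_neq0; rewrite -[v]trmxK vT0 trmx0 eqxx.
apply/(negP hM)/eqP; apply: mulmx_cV_ext => q; apply: (qmulIl imq_neq0).
by rewrite (intertwinesP hTM) Tv0 imq0 qmul0l mulmx0 mul0mx qmul0r.
Qed.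

Lemma intertwiner_inj (c : 'cV[R]_4) : M *m c = 0 -> c = 0.
Proof.
move=> hc; apply/eqP/negPn/negP => c_neq0.
have McR0 : M *m Rmx c = 0.
  apply: intertwines_eq intertwiner_unitmx (intertwines_mulRmx c hTM) (intertwines0 T) _.
  by rewrite -mulmxA Rmx_mul qmul1l hc mul0mx.
apply/(negP hM)/eqP; apply: mulmx_cV_ext => q.
by rewrite -[q]qmul1r -(qinvl c_neq0) qmulA -Rmx_mul mulmxA McR0 !mul0mx.
Qed.

Lemma intertwiner_mul a x y z : qmul (imq x) (imq y) = a *: imq z ->
  qmul (imq (T *m x)) (imq (T *m y)) = a *: imq (T *m z).
Proof.
move=> h; apply/eqP; rewrite -subr_eq0; apply/eqP; apply: intertwiner_inj.
rewrite mulmxBr -scalemxAr -(intertwinesP hTM) !intertwines_q1 // qmulA h qmulZl.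
by rewrite subrr.
Qed.

Lemma intertwiner_sqr x : qmul (imq x) (imq x) = - q1 ->
  qmul (imq (T *m x)) (imq (T *m x)) = - q1.
Proof.
move=> h; apply/eqP; rewrite -subr_eq0; apply/eqP; apply: intertwiner_inj.
rewrite mulmxBr -(intertwinesP hTM) !intertwines_q1 // qmulA h mulmxN.
by rewrite qmulNl qmul1l subrr.
Qed.

Lemma intertwiner_factor : exists w w' : 'cV[R]_4,
  [/\ qnorm2 w = 1, w' != 0, M = Lmx w *m Rmx w',
      forall x, qmul (imq x) w = qmul w (imq (T *m x)) & \det T = 1].
Proof.
have [imq_i imq_j imq_k] := @imq_e3 R.
pose b k := imq (T *m e3 k).
have b00 : qmul (b 0) (b 0) = - q1 by apply: intertwiner_sqr; rewrite imq_i; quat_ring.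
have b11 : qmul (b 1) (b 1) = - q1 by apply: intertwiner_sqr; rewrite imq_j; quat_ring.
have b01 : qmul (b 0) (b 1) = b 2.
  by rewrite -[b 2]scale1r; apply: intertwiner_mul; rewrite imq_i imq_j imq_k; quat_ring.
have b10 : qmul (b 1) (b 0) = - b 2.
  by rewrite -scaleN1r; apply: intertwiner_mul; rewrite imq_i imq_j imq_k; quat_ring.
have [b22 _ _ _ _] := quat_triple_mul b00 b11 b01 b10.
have [w [w_norm wi wj wk]] := conj_quat_triple b00 b11 b01 b10.
have w_neq0 : w != 0 by rewrite -qnorm2_eq0 w_norm oner_neq0.
have hw x : qmul (imq x) w = qmul w (imq (T *m x)).
  rewrite (cV3E x) !mulmxDr -!scalemxAr !imqD !imqZ imq_i imq_j imq_k.
  by rewrite !qmulDl !qmulDr !qmulZl !qmulZr wi wj wk.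
pose w' := qmul (qinv w) (M *m q1).
have M_LR : M = Lmx w *m Rmx w'.
  apply: intertwines_eq intertwiner_unitmx hTM (intertwines_LR w' hw) _.
  by rewrite -mulmxA Rmx_mul Lmx_mul qmul1l qmulA qinvr // qmul1l.
exists w, w'; split=> //; last exact: det_quat_triple.
apply/eqP => w'0; apply: (negP hM); apply/eqP; apply: mulmx_cV_ext => q.
by rewrite M_LR -mulmxA Rmx_mul Lmx_mul w'0 qmul0r qmul0r mul0mx.
Qed.

End NonzeroIntertwiner.
End Intertwiners.

Lemma mx_entry_delta (R : pzSemiRingType) m n (X : 'M[R]_(m, n)) i j :
  X i j = ((delta_mx i 0 : 'cV[R]_m)^T *m X *m (delta_mx j 0 : 'cV[R]_n)) 0 0.
Proof. by rewrite trmx_delta -rowE -colE !mxE. Qed.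

Lemma cV_sum_delta (R : pzSemiRingType) n (v : 'cV[R]_n) :
  v = \sum_(i < n) v i 0 *: delta_mx i 0.
Proof.
by rewrite {1}(matrix_sum_delta v); apply: eq_bigr => i _; rewrite big_ord1.
Qed.

Section InvariantForm.
Variables (R : realFieldType) (n : nat) (f : 'cV[R]_n -> 'cV[R]_n -> R).
Hypotheses (f_sym : forall Z W, f Z W = f W Z)
  (f_linl : forall a Z Z' W, f (a *: Z + Z') W = a * f Z W + f Z' W)
  (f_pos : forall Z, Z != 0 -> 0 < f Z Z).

Let gram : 'M[R]_n := \matrix_(i, j) f (delta_mx i 0) (delta_mx j 0).

Lemma form0l W : f 0 W = 0.
Proof. by have := f_linl 1 0 0 W; rewrite scale1r addr0 mul1r => h; lra. Qed.

Lemma formZl a Z W : f (a *: Z) W = a * f Z W.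
Proof. by rewrite -[a *: Z]addr0 f_linl form0l addr0. Qed.

Lemma formDl Z Z' W : f (Z + Z') W = f Z W + f Z' W.
Proof. by rewrite -{1}[Z]scale1r f_linl mul1r. Qed.

Lemma form_suml I (r : seq I) (F : I -> 'cV[R]_n) W :
  f (\sum_(i <- r) F i) W = \sum_(i <- r) f (F i) W.
Proof. exact: (big_morph (f^~ W) (fun Z Z' => formDl Z Z' W) (form0l W)). Qed.

Lemma form_gramE Z W : f Z W = (Z^T *m gram *m W) 0 0.
Proof.
rewrite mxE; under eq_bigr => j _ do rewrite mxE mulr_suml.
rewrite exchange_big {1}(cV_sum_delta Z) form_suml; apply: eq_bigr => i _.
rewrite formZl f_sym {1}(cV_sum_delta W) form_suml big_distrr; apply: eq_bigr => j _.
by rewrite formZl f_sym !mxE /= -mulrA [_ * W j 0]mulrC.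
Qed.

Lemma gram_det_neq0 : \det gram != 0.
Proof.
apply/negP => /det0P [v v_neq0 hv].
have : f v^T v^T = 0 by rewrite form_gramE trmxK hv mul0mx mxE.
apply/eqP; rewrite lt0r_neq0 // f_pos //.
by apply: contraNneq v_neq0 => /(congr1 trmx); rewrite trmxK trmx0 => ->.
Qed.

Lemma det_form_invariant (phi : 'M[R]_n) :
  (forall Z W, f (phi *m Z) (phi *m W) = f Z W) -> \det phi = 1 \/ \det phi = -1.
Proof.
move=> f_inv.
have gram_inv : phi^T *m gram *m phi = gram.
  apply/matrixP => i j; rewrite [LHS]mx_entry_delta [RHS]mx_entry_delta.
  by rewrite !mulmxA -trmx_mul -[in LHS]mulmxA -!form_gramE f_inv.
have := congr1 determinant gram_inv; rewrite !det_mulmx det_tr => h.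
have : (\det phi ^+ 2 - 1) * \det gram = 0 by rewrite mulrBl mul1r -{2}h; ring.
move/eqP; rewrite mulf_eq0 (negPf gram_det_neq0) orbF subr_eq0 sqrf_eq1.
by case/orP => /eqP ->; [left | right].
Qed.

End InvariantForm.

Lemma blk_idx p (r : 'I_p) (i : 'I_4) : blk (idx r i) = r.
Proof. by apply: val_inj => /=; have := ltn_ord i; lia. Qed.

Lemma off_idx p (r : 'I_p) (i : 'I_4) : off (idx r i) = i.
Proof. by apply: val_inj => /=; have := ltn_ord i; lia. Qed.

Lemma idx_blk_off p (c : 'I_(p * 4)) : idx (blk c) (off c) = c.
Proof. by apply: val_inj => /=; lia. Qed.

Lemma sum_blk (R : nmodType) p (r : 'I_p) (F : 'I_(p * 4) -> R) :
  (forall c, blk c != r -> F c = 0) -> \sum_c F c = \sum_(k < 4) F (idx r k).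
Proof.
move=> F0; rewrite (bigID (fun c => blk c == r)) /= [X in _ + X]big1 ?addr0;
  last by move=> c /F0.
rewrite (reindex_onto (idx r) (@off p)) /=; last by move=> c /eqP <-; rewrite idx_blk_off.
by apply: eq_bigl => k; rewrite blk_idx off_idx !eqxx.
Qed.

Section BlockDiagonal.
Variables (R : realType) (p : nat) (A : 'I_p -> 'M[R]_3).
Implicit Types (Z : 'cV[R]_3) (N : 'M[R]_(p * 4)).

Lemma JZ_entry Z a b :
  JZ A Z a b = if blk a == blk b then Lmx (Aq A (blk a) Z) (off a) (off b) else 0.
Proof. by rewrite mxE. Qed.

Lemma Nblk_JZ Z r : Nblk (JZ A Z) r r = Lmx (Aq A r Z).
Proof. by apply/matrixP => i j; rewrite mxE JZ_entry !blk_idx !off_idx eqxx. Qed.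

Lemma Nblk_JZ_mull Z N r s : Nblk (JZ A Z *m N) r s = Lmx (Aq A r Z) *m Nblk N r s.
Proof.
apply/matrixP => i j; rewrite !mxE (@sum_blk _ _ r).
  by apply: eq_bigr => k _; rewrite !mxE !blk_idx !off_idx eqxx.
by move=> c hc; rewrite !mxE blk_idx eq_sym (negPf hc) mul0r.
Qed.

Lemma Nblk_JZ_mulr Z N r s : Nblk (N *m JZ A Z) r s = Nblk N r s *m Lmx (Aq A s Z).
Proof.
apply/matrixP => i j; rewrite !mxE (@sum_blk _ _ s).
  by apply: eq_bigr => k _; rewrite !mxE !blk_idx !off_idx eqxx.
by move=> c hc; rewrite !mxE blk_idx (negPf hc) mulr0.
Qed.

Lemma JZ_linear a Z Z' : JZ A (a *: Z + Z') = a *: JZ A Z + JZ A Z'.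
Proof.
have linE m n (X Y : 'M[R]_(m, n)) i j : (a *: X + Y) i j = a * X i j + Y i j.
  by rewrite !mxE.
apply/matrixP => i j; rewrite linE !JZ_entry; case: ifP => _; last by rewrite mulr0 addr0.
by rewrite /Aq mulmxDr -scalemxAr imqD imqZ LmxD LmxZ linE.
Qed.

Lemma JZ_eq0 r Z : A r \in unitmx -> JZ A Z = 0 -> Z = 0.
Proof.
move=> hAr JZ0; have Nblk0 : Nblk (0 : 'M[R]_(p * 4)) r r = 0.
  by apply/matrixP => i j; rewrite !mxE.
apply: (can_inj (mulKmx hAr)); apply: (can_inj (@imqK R)); rewrite mulmx0 imq0.
by rewrite -/(Aq A r Z) -[Aq A r Z]qmul1r -Lmx_mul -Nblk_JZ JZ0 Nblk0 mul0mx.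
Qed.

End BlockDiagonal.

Section OrthogonalNormalizer.
Variables (R : realType) (p : nat) (A : 'I_p -> 'M[R]_3).
Variable ip : 'M[R]_(p * 4) -> 'M[R]_(p * 4) -> R.
Hypothesis hip : is_inner_on_V A ip.
Variables (N : 'M[R]_(p * 4)) (phi : 'M[R]_3).
Hypothesis hN : in_normalizer A ip N.
Hypothesis hphi : forall Z, invmx N *m JZ A Z *m N = JZ A (phi *m Z).

Lemma normalizer_unitmx : N \in unitmx.
Proof. by case: hN => NTN _ _; case: (mulmx1_unit NTN). Qed.

Lemma inV_JZ Z : inV A (JZ A Z). Proof. by exists Z. Qed.

Lemma JZ_mul_normalizer Z : JZ A Z *m N = N *m JZ A (phi *m Z).
Proof. by rewrite -hphi !mulmxA mulmxV ?normalizer_unitmx // mul1mx. Qed.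

Lemma det_phi_sign r : A r \in unitmx -> \det phi = 1 \/ \det phi = -1.
Proof.
move=> hAr; case: hip => ip_sym ip_lin ip_pos; case: hN => _ _ ip_inv.
apply: (@det_form_invariant _ _ (fun Z W => ip (JZ A Z) (JZ A W)))
  => [Z W|a Z Z' W|Z Z0|Z W].
- exact: ip_sym (inV_JZ Z) (inV_JZ W).
- by rewrite JZ_linear ip_lin //; apply: inV_JZ.
- by apply: ip_pos (inV_JZ Z) _; apply: contra Z0 => /eqP /(JZ_eq0 hAr) ->.
- have conjN_phi Y : conjN N (JZ A (phi *m Y)) = JZ A Y.
    by rewrite /conjN -JZ_mul_normalizer mulmxK // normalizer_unitmx.
  by rewrite -[in RHS]conjN_phi -[in RHS](conjN_phi W) ip_inv //; apply: inV_JZ.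
Qed.

Lemma intertwines_Nblk r s : A r \in unitmx ->
  intertwines (A s *m phi *m invmx (A r)) (Nblk N r s).
Proof.
move=> hAr x; have := Nblk_JZ_mull A (invmx (A r) *m x) N r s.
by rewrite JZ_mul_normalizer Nblk_JZ_mulr /Aq mulKVmx // !mulmxA => <-.
Qed.

End OrthogonalNormalizer.

Unset Implicit Arguments.

Theorem lemma1 (R : realType) (p : nat) (A : 'I_p -> 'M[R]_3)
  (hA : forall s, A s \in unitmx)
  (ip : 'M[R]_(p * 4) -> 'M[R]_(p * 4) -> R) (hip : is_inner_on_V A ip)
  (N : 'M[R]_(p * 4)) (hN : in_normalizer A ip N)
  (phi : 'M[R]_3)
  (hphi : forall Z : 'cV[R]_3, invmx N *m JZ A Z *m N = JZ A (phi *m Z))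
  (r s : 'I_p) :
  Nblk N r s != 0 ->
  exists w w' : 'cV[R]_4,
    [/\ qnorm2 w = 1, w' != 0,
        Nblk N r s = Lmx w *m Rmx w',
        (forall Z : 'cV[R]_3, qmul (qinv w) (qmul (Aq A r Z) w) = Aq A s (phi *m Z))
      & \det (A s *m invmx (A r)) = \det phi /\ (\det phi = 1 \/ \det phi = -1)].
Proof.
move=> Nrs_neq0.
have hint := intertwines_Nblk hN hphi s (hA r).
have [w [w' [w_norm w'_neq0 Nrs_LR hw detT]]] := intertwiner_factor hint Nrs_neq0.
have w_neq0 : w != 0 by rewrite -qnorm2_eq0 w_norm oner_neq0.
exists w, w'; split=> //.
  move=> Z; rewrite /Aq -{2}[Z](mulKmx (hA r)) hw qmulA qinvl // qmul1l.
  by rewrite !mulmxA mulmxKV.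
have sign := det_phi_sign hip hN hphi (hA r).
have hd : \det (A s *m invmx (A r)) * \det phi = 1.
  by rewrite -detT !det_mulmx det_inv mulrAC.
split=> //; case: sign => e; rewrite e in hd *; first by rewrite mulr1 in hd.
by rewrite mulrN1 in hd; rewrite -hd opprK.
Qed.
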